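(* Let $(M,d)$ be a bounded hyperconvex metric space and let $T: M\to M$ be an orbitally wrt nonexpansive mapping. Then $F(T)=\{x\in M: Tx=x\}\neq\emptyset$ and $F(T)$ (with the induced metric) is hyperconvex.
   Context: A metric space $(M,d)$ is hyperconvex if for every family of closed balls $\{B(x_i,r_i)\}_{i\in I}$ in $M$ with $d(x_i,x_j)\le r_i+r_j$ for all $i,j$, one has $\bigcap_{i}B(x_i,r_i)\neq\emptyset$. For $x\in M$, $K\subseteq M$, $r_x(K)=\sup\{d(x,y):y\in K\}$; $O_T(y)=\{y,Ty,T^2y,\dots\}$. $T$ is orbitally wrt nonexpansive if $d(Tx,Ty)\le r_x(O_T(y))$ for all $x,y\in M$. *)

From Stdlib Require Import Reals.
From Coquelicot Require Import Coquelicot.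
Open Scope R_scope.

Definition is_metric {M : Type} (d : M -> M -> R) : Prop :=
  (forall x y, 0 <= d x y) /\
  (forall x y, d x y = 0 <-> x = y) /\
  (forall x y, d x y = d y x) /\
  (forall x y z, d x z <= d x y + d y z).

Definition bounded_metric {M : Type} (d : M -> M -> R) : Prop :=
  exists B : R, forall x y, d x y <= B.

Definition cball {M : Type} (d : M -> M -> R) (x : M) (r : R) (y : M) : Prop :=
  d x y <= r.

Definition hyperconvex_in {M : Type} (d : M -> M -> R) (S : M -> Prop) : Prop :=
  forall (I : Type) (c : I -> M) (r : I -> R),
    (forall i, S (c i)) ->
    (forall i j, d (c i) (c j) <= r i + r j) ->
    exists z, S z /\ forall i, cball d (c i) (r i) z.

Definition hyperconvex {M : Type} (d : M -> M -> R) : Prop :=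
  hyperconvex_in d (fun _ => True).

Definition orbit {M : Type} (T : M -> M) (y : M) (z : M) : Prop :=
  exists n : nat, z = Nat.iter n T y.

Definition rad {M : Type} (d : M -> M -> R) (x : M) (K : M -> Prop) : Rbar :=
  Lub_Rbar (fun t => exists y, K y /\ t = d x y).

Definition orbitally_wrt_nonexpansive {M : Type} (d : M -> M -> R) (T : M -> M) : Prop :=
  forall x y, Rbar_le (d (T x) (T y)) (rad d x (orbit T y)).

Definition fixed_points {M : Type} (T : M -> M) (x : M) : Prop := T x = x.

(** Call a set admissible if it is an intersection of closed balls.  In a
    hyperconvex space every family of pairwise intersecting admissible sets has
    a common point, so by Zorn's lemma every nonempty T-invariant admissible set
    A0 contains a minimal one, A, and minimality forces A = cov(T(A)).  If D
    bounds the diameter of A, the points of A lying within D/2 of all of A form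
    again a nonempty invariant admissible set: invariance holds because
    d(Tx, Tb) is bounded by the distances from x to the orbit of b, which stays
    in A.  Hence this set is A itself, the diameter of A is at most half of
    itself, and A is a fixed point.  An intersection of balls B(c_i, r_i) with
    fixed centres is invariant, since d(Tz, c) <= d(z, c) for a fixed c, so it
    contains a fixed point: F(T) is nonempty and hyperconvex. *)

From mathcomp Require boolp classical_sets.
From Stdlib Require Import Reals Lra.
From Coquelicot Require Import Coquelicot.
Open Scope R_scope.

Lemma Zorn_in (X : Type) (G : X -> Prop) (Rl : X -> X -> Prop) (x0 : X) :
  G x0 -> (forall x, Rl x x) -> (forall x y z, Rl x y -> Rl y z -> Rl x z) ->
  (forall C : X -> Prop, (forall x, C x -> G x) ->
     (forall x y, C x -> C y -> Rl x y \/ Rl y x) ->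
     exists u, G u /\ forall x, C x -> Rl x u) ->
  exists m, G m /\ forall x, G x -> Rl m x -> Rl x m.
Proof.
  intros Gx0 Rrefl Rtrans Hchain.
  set (Rb := fun p q : {x | G x} => boolp.asbool (Rl (proj1_sig p) (proj1_sig q))).
  destruct (@classical_sets.ZL_preorder _ (exist _ x0 Gx0) Rb) as [[m Gm] Hmax].
  - intros [x Gx]; apply boolp.asboolT, Rrefl.
  - intros p q s Hpq Hqs; apply boolp.asboolT, Rtrans with (proj1_sig q);
      apply boolp.asboolW; assumption.
  - intros A Htot.
    destruct (Hchain (fun x => exists p, A p /\ proj1_sig p = x)) as [u [Gu Hu]].
    + intros x [[y Gy] [_ <-]]; exact Gy.
    + intros x y [p [Ap <-]] [q [Aq <-]].
      destruct (Htot p q Ap Aq); [left | right]; apply boolp.asboolW; assumption.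
    + exists (exist _ u Gu); intros p Ap; apply boolp.asboolT, Hu; exists p; auto.
  - exists m; split; [exact Gm |].
    intros x Gx Hmx; apply boolp.asboolW, (Hmax (exist _ x Gx)), boolp.asboolT, Hmx.
Qed.

Section Admissible.

Variables (M : Type) (d : M -> M -> R).
Hypothesis d_metric : is_metric d.
Hypothesis d_hyperconvex : hyperconvex d.

Lemma dist_ge0 x y : 0 <= d x y.
Proof. destruct d_metric as (H & _); apply H. Qed.

Lemma dist_eq0 x y : d x y = 0 <-> x = y.
Proof. destruct d_metric as (_ & H & _); apply H. Qed.

Lemma dist_sym x y : d x y = d y x.
Proof. destruct d_metric as (_ & _ & H & _); apply H. Qed.

Lemma dist_triangle x y z : d x z <= d x y + d y z.
Proof. destruct d_metric as (_ & _ & _ & H); apply H. Qed.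

Lemma dist_refl x : d x x = 0.
Proof. apply dist_eq0; reflexivity. Qed.

Definition cover (A : M -> Prop) (z : M) : Prop :=
  forall c r, (forall a, A a -> cball d c r a) -> cball d c r z.

Definition admissible (A : M -> Prop) : Prop := forall z, cover A z -> A z.

Definition bigcap (F : (M -> Prop) -> Prop) (z : M) : Prop := forall Y, F Y -> Y z.

Lemma subset_cover A a : A a -> cover A a.
Proof. intros Ha c r Hc; exact (Hc a Ha). Qed.

Lemma cover_mono (A B : M -> Prop) :
  (forall a, A a -> B a) -> forall z, cover A z -> cover B z.
Proof. intros AB z Hz c r Hc; apply Hz; auto. Qed.

Lemma admissible_cover A : admissible (cover A).
Proof. intros z Hz c r Hc; apply Hz; intros a Ha; exact (Ha c r Hc). Qed.

Lemma admissible_cball c r : admissible (cball d c r).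
Proof. intros z Hz; apply Hz; auto. Qed.

Lemma admissible_bigcap F : (forall Y, F Y -> admissible Y) -> admissible (bigcap F).
Proof.
  intros Fadm z Hz Y HY; apply (Fadm Y HY).
  intros c r Hc; apply Hz; intros a Ha; exact (Hc a (Ha Y HY)).
Qed.

Lemma cball_meet a b r s :
  0 <= r -> 0 <= s -> d a b <= r + s -> exists z, cball d a r z /\ cball d b s z.
Proof.
  intros r_ge0 s_ge0 Hab.
  destruct (d_hyperconvex bool (fun i => if i then a else b)
              (fun i => if i then r else s)) as [z [_ Hz]].
  - intros; exact I.
  - intros [|] [|]; rewrite ?dist_refl; try lra.
    rewrite dist_sym; lra.
  - exists z; exact (conj (Hz true) (Hz false)).
Qed.

Lemma bigcap_admissible_nonempty F :
  (forall Y, F Y -> admissible Y) ->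
  (forall Y Z, F Y -> F Z -> exists w, Y w /\ Z w) ->
  exists z, bigcap F z.
Proof.
  intros Fadm Fmeet.
  set (J := {p : M * R | exists Y, F Y /\ forall a, Y a -> cball d (fst p) (snd p) a}).
  destruct (d_hyperconvex J (fun p => fst (proj1_sig p)) (fun p => snd (proj1_sig p)))
    as [z [_ Hz]].
  - intros; exact I.
  - intros [[p s] [Y [FY Hp]]] [[q t] [Z [FZ Hq]]]; simpl in *.
    destruct (Fmeet Y Z FY FZ) as [w [Yw Zw]].
    specialize (Hp w Yw); specialize (Hq w Zw); unfold cball in *.
    specialize (dist_triangle p w q); rewrite (dist_sym w q); lra.
  - exists z; intros Y FY; apply (Fadm Y FY); intros c r Hc.
    exact (Hz (exist _ (c, r) (ex_intro _ Y (conj FY Hc)))).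
Qed.

Section Orbital.

Variable T : M -> M.
Hypothesis T_orbital : orbitally_wrt_nonexpansive d T.
Hypothesis d_bounded : bounded_metric d.

Definition image (A : M -> Prop) (z : M) : Prop := exists a, A a /\ z = T a.

Definition invariant (A : M -> Prop) : Prop := forall a, A a -> A (T a).

Record invariant_admissible_in (A0 A : M -> Prop) : Prop := {
  ia_admissible : admissible A;
  ia_invariant : invariant A;
  ia_nonempty : exists a, A a;
  ia_sub : forall x, A x -> A0 x }.

Lemma invariant_iter A : invariant A -> forall n y, A y -> A (Nat.iter n T y).
Proof. intros HA n; induction n; intros y Hy; simpl; auto. Qed.

Lemma dist_T_le_orbit x y u :
  (forall n, d x (Nat.iter n T y) <= u) -> d (T x) (T y) <= u.
Proof.
  intros Hu.
  assert (Hrad : Rbar_le (rad d x (orbit T y)) u).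
  { apply (proj2 (Lub_Rbar_correct _)).
    intros t [z [[n ->] ->]]; apply Hu. }
  exact (Rbar_le_trans (Finite (d (T x) (T y))) _ (Finite u) (T_orbital x y) Hrad).
Qed.

Lemma dist_T_fixed z c : T c = c -> d (T z) c <= d z c.
Proof.
  intros Hc.
  assert (H : d (T z) (T c) <= d z c).
  { apply dist_T_le_orbit; intro n.
    replace (Nat.iter n T c) with c; [apply Rle_refl |].
    induction n; simpl; congruence. }
  rewrite Hc in H; exact H.
Qed.

Lemma invariant_admissible_chain_bound A0 (C : (M -> Prop) -> Prop) :
  invariant_admissible_in A0 A0 ->
  (forall Y, C Y -> invariant_admissible_in A0 Y) ->
  (forall Y Z, C Y -> C Z -> (forall x, Z x -> Y x) \/ (forall x, Y x -> Z x)) ->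
  invariant_admissible_in A0 (bigcap (fun Y => Y = A0 \/ C Y)).
Proof.
  intros G0 GC Ctot; set (F := fun Y => Y = A0 \/ C Y).
  assert (GF : forall Y, F Y -> invariant_admissible_in A0 Y).
  { intros Y [-> | HY]; auto. }
  assert (Ftot : forall Y Z, F Y -> F Z ->
            (forall x, Z x -> Y x) \/ (forall x, Y x -> Z x)).
  { intros Y Z [-> | HY] [-> | HZ]; auto.
    - left; apply (ia_sub _ _ (GC Z HZ)).
    - right; apply (ia_sub _ _ (GC Y HY)). }
  split.
  - apply admissible_bigcap; intros Y FY; apply (ia_admissible _ _ (GF Y FY)).
  - intros a Ha Y FY; apply (ia_invariant _ _ (GF Y FY)), Ha, FY.
  - apply bigcap_admissible_nonempty.
    + intros Y FY; apply (ia_admissible _ _ (GF Y FY)).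
    + intros Y Z FY FZ.
      destruct (ia_nonempty _ _ (GF Y FY)) as [y Yy].
      destruct (ia_nonempty _ _ (GF Z FZ)) as [z Zz].
      destruct (Ftot Y Z FY FZ) as [ZY | YZ]; [exists z | exists y]; auto.
  - intros x Hx; apply Hx; left; reflexivity.
Qed.

Lemma minimal_invariant_admissible_exists A0 :
  invariant_admissible_in A0 A0 ->
  exists A, invariant_admissible_in A0 A /\
    forall B, invariant_admissible_in A0 B ->
      (forall x, B x -> A x) -> forall x, A x -> B x.
Proof.
  intros G0.
  destruct (Zorn_in (M -> Prop) (invariant_admissible_in A0)
              (fun P Q : M -> Prop => forall x, Q x -> P x) A0 G0)
    as [A [GA Amin]]; eauto.
  intros C GC Ctot.
  exists (bigcap (fun Y => Y = A0 \/ C Y)); split.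
  - apply invariant_admissible_chain_bound; auto.
  - intros Y CY x Hx; apply Hx; right; exact CY.
Qed.

Section Minimal.

Variables A0 A : M -> Prop.
Hypothesis A_ia : invariant_admissible_in A0 A.
Hypothesis A_minimal : forall B, invariant_admissible_in A0 B ->
  (forall x, B x -> A x) -> forall x, A x -> B x.

Lemma minimal_sub_cover_image a : A a -> cover (image A) a.
Proof.
  destruct A_ia as [A_adm A_inv [a0 Ha0] A_sub].
  assert (cover_A : forall z, cover (image A) z -> A z).
  { intros z Hz; apply A_adm; revert z Hz; apply cover_mono.
    intros w [b [Hb ->]]; auto. }
  apply A_minimal; [split | exact cover_A].
  - apply admissible_cover.
  - intros z Hz; apply subset_cover; exists z; auto.
  - exists (T a0); apply subset_cover; exists a0; auto.
  - auto.
Qed.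

Lemma minimal_diam_halve D :
  (forall a b, A a -> A b -> d a b <= D) ->
  forall a b, A a -> A b -> d a b <= D / 2.
Proof.
  intros HD; destruct A_ia as [A_adm A_inv [a0 Ha0] A_sub].
  assert (D_ge0 : 0 <= D) by (rewrite <- (dist_refl a0); auto).
  set (F := fun Y => Y = A \/ exists a, A a /\ Y = cball d a (D / 2)).
  assert (F_adm : forall Y, F Y -> admissible Y).
  { intros Y [-> | [a [_ ->]]]; [exact A_adm | apply admissible_cball]. }
  assert (C_ia : invariant_admissible_in A0 (bigcap F)).
  { split.
    - apply admissible_bigcap, F_adm.
    - intros x Hx Y [-> | [a [Ha ->]]].
      + apply A_inv, Hx; left; reflexivity.
      + unfold cball; rewrite dist_sym.
        apply (minimal_sub_cover_image a Ha (T x) (D / 2)).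
        intros w [b [Hb ->]]; apply dist_T_le_orbit; intro n.
        rewrite dist_sym; apply Hx; right.
        exists (Nat.iter n T b); split; [apply invariant_iter |]; auto.
    - apply bigcap_admissible_nonempty; [exact F_adm |].
      intros Y Z [-> | [a [Ha ->]]] [-> | [b [Hb ->]]].
      + exists a0; auto.
      + exists b; split; [| unfold cball; rewrite dist_refl; lra]; auto.
      + exists a; split; [unfold cball; rewrite dist_refl; lra |]; auto.
      + apply cball_meet; specialize (HD a b Ha Hb); lra.
    - intros x Hx; apply A_sub, Hx; left; reflexivity. }
  intros a b Ha Hb.
  apply (A_minimal _ C_ia) with (x := b); auto.
  - intros x Hx; apply Hx; left; reflexivity.
  - right; exists a; auto.
Qed.

Lemma minimal_singleton a b : A a -> A b -> a = b.
Proof.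
  intros Ha Hb.
  set (E := fun t => exists a b, A a /\ A b /\ t = d a b).
  destruct (completeness E) as [D [D_ub D_lub]].
  - destruct d_bounded as [B HB]; exists B; intros t [x [y [_ [_ ->]]]]; apply HB.
  - exists (d a b), a, b; auto.
  - assert (HD : forall x y, A x -> A y -> d x y <= D).
    { intros x y Hx Hy; apply D_ub; exists x, y; auto. }
    assert (D_le : D <= D / 2).
    { apply D_lub; intros t [x [y [Hx [Hy ->]]]]; apply minimal_diam_halve; auto. }
    apply dist_eq0, Rle_antisym; [| apply dist_ge0].
    specialize (HD a b Ha Hb); lra.
Qed.

End Minimal.

Lemma invariant_admissible_fixed_point A0 :
  invariant_admissible_in A0 A0 -> exists p, A0 p /\ T p = p.
Proof.
  intros G0.
  destruct (minimal_invariant_admissible_exists A0 G0) as [A [GA Amin]].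
  destruct (ia_nonempty _ _ GA) as [a Ha].
  exists a; split; [apply (ia_sub _ _ GA), Ha |].
  symmetry; apply (minimal_singleton A0 A GA Amin); auto.
  apply (ia_invariant _ _ GA), Ha.
Qed.

Lemma hyperconvex_fixed_points : hyperconvex_in d (fixed_points T).
Proof.
  intros I c r Hc Hcr.
  assert (r_ge0 : forall i, 0 <= r i).
  { intro i; specialize (Hcr i i); rewrite dist_refl in Hcr; lra. }
  set (F := fun Y => exists i, Y = cball d (c i) (r i)).
  destruct (invariant_admissible_fixed_point (bigcap F)) as [z [Hz Tz]].
  - split.
    + apply admissible_bigcap; intros Y [i ->]; apply admissible_cball.
    + intros z Hz Y [i ->]; unfold cball; rewrite dist_sym.
      apply Rle_trans with (d z (c i)); [apply dist_T_fixed, Hc |].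
      rewrite dist_sym; apply Hz; exists i; reflexivity.
    + apply bigcap_admissible_nonempty.
      * intros Y [i ->]; apply admissible_cball.
      * intros Y Z [i ->] [j ->]; apply cball_meet; auto.
    + auto.
  - exists z; split; [exact Tz |]; intro i; apply Hz; exists i; reflexivity.
Qed.

End Orbital.

End Admissible.

Theorem corollary2p2 (M : Type) (d : M -> M -> R) (T : M -> M)
  (Hmet : is_metric d) (Hbdd : bounded_metric d) (Hhyp : hyperconvex d)
  (HT : orbitally_wrt_nonexpansive d T) :
  (exists x, fixed_points T x) /\ hyperconvex_in d (fixed_points T).
Proof.
  pose proof (hyperconvex_fixed_points M d Hmet Hhyp T HT Hbdd) as Hfix.
  split; [| exact Hfix].
  destruct (Hfix False (fun i => match i with end) (fun i => match i with end))
    as [z [Tz _]]; try intros [].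
  exists z; exact Tz.
Qed.
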